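(* Let $\tau\colon k[y]\otimes k[x]\to k[x]\otimes k[y]$ be the twisting map \[\tau(y^m\otimes x^n)=\sum_{i=0}^n\binom{n}{i}\frac{(m+n-i-1)!}{(m-1)!}\,x^i\otimes y^{m+n-i},\] so that $k[x]\otimes_\tau k[y]$ is the Jordan plane $J=k\langle x,y\mid yx-xy=y^2\rangle$. Then $\tau$ is continuous as a map $k[y]\otimes^!k[x]\to k[x]\otimes^!k[y]$ (for the cofinite topologies on $k[x]$ and $k[y]$) if and only if $k$ has positive characteristic.
   Context: $k$ is a field with the discrete topology; the integer $\frac{(m+n-i-1)!}{(m-1)!}$ is interpreted in $k$ (with $y^0\otimes x^n\mapsto x^n\otimes 1$, i.e. $\tau$ restricts to the swap on $1\otimes k[x]$). For an algebra $R$, the cofinite topology is the linear topology whose open subspaces are those containing a two-sided ideal of finite codimension. For linearly topologized spaces $E,F$, $E\otimes^!F$ is $E\otimes F$ with the linear topology whose open subspaces contain $E_0\otimes F+E\otimes F_0$ for some open subspaces $E_0\subseteq E$, $F_0\subseteq F$. $k[x]\otimes_\tau k[y]$ is $k[x]\otimes k[y]$ with multiplication $(m\otimes m)\circ(\mathrm{id}\otimes\tau\otimes\mathrm{id})$. *)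

From HB Require Import structures.
From mathcomp Require Import all_boot all_order all_algebra.
Set Implicit Arguments. Unset Strict Implicit. Unset Printing Implicit Defensive.
Import GRing.Theory.
Local Open Scope ring_scope.

(* Representation of tensor products: the vector space k[u] (x) k[v] is
   represented by bivariate polynomials {poly {poly K}}: the coefficient of
   u^m (x) v^n in P is P`_m`_n (outer index = exponent of the FIRST factor).
   The K-scalar action on {poly {poly K}} is  a%:P *: P. *)

Section Defs.
Variable K : fieldType.

Definition tens (e f : {poly K}) : {poly {poly K}} :=
  map_poly (fun a : K => a *: f) e.

Definition subspace (U : {poly K} -> Prop) : Prop :=
  U 0 /\ forall (a : K) u v, U u -> U v -> U (a *: u + v).

Definition tsubspace (W : {poly {poly K}} -> Prop) : Prop :=
  W 0 /\ forall (a : K) u v, W u -> W v -> W (a%:P *: u + v).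

Definition ideal (I : {poly K} -> Prop) : Prop :=
  I 0 /\ (forall u v, I u -> I v -> I (u - v)) /\
  (forall a u, I u -> I (a * u) /\ I (u * a)).

Definition fin_codim (I : {poly K} -> Prop) : Prop :=
  exists s : seq {poly K}, forall f : {poly K},
    exists c : nat -> K, I (f - \sum_(i < size s) c i *: s`_i).

Definition cof_open (U : {poly K} -> Prop) : Prop :=
  subspace U /\
  exists I, ideal I /\ fin_codim I /\ forall u, I u -> U u.

(* E0 (x) F + E (x) F0, as the set of finite sums of elementary tensors
   e (x) f with e in E0 or f in F0 *)
Definition tgen (E0 F0 : {poly K} -> Prop) (P : {poly {poly K}}) : Prop :=
  exists s : seq ({poly K} * {poly K}),
    (forall p, p \in s -> E0 p.1 \/ F0 p.2) /\
    P = \sum_(p <- s) tens p.1 p.2.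

(* open subspaces of k[u] (x)^! k[v], both factors with the cofinite topology *)
Definition tens_open (W : {poly {poly K}} -> Prop) : Prop :=
  tsubspace W /\
  exists E0 F0, cof_open E0 /\ cof_open F0 /\ forall P, tgen E0 F0 P -> W P.

Definition tcontinuous (t : {poly {poly K}} -> {poly {poly K}}) : Prop :=
  forall W, tens_open W -> tens_open (fun P => W (t P)).

(* the coefficient  binom(n,i) (m+n-i-1)!/(m-1)!, with the convention
   y^0 (x) x^n |-> x^n (x) 1 *)
Definition jcoef (m n i : nat) : nat :=
  if m == 0%N then (i == n : nat)
  else ('C(n, i) * ((m + n - i - 1)`! %/ (m - 1)`!))%N.

(* tau : k[y] (x) k[x] -> k[x] (x) k[y];
   input: P`_m`_n = coefficient of y^m (x) x^n;
   output: coefficient of x^i (x) y^j at index i, j *)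
Definition tau (P : {poly {poly K}}) : {poly {poly K}} :=
  \sum_(m < size P) \sum_(n < size P`_m)
     (P`_m`_n)%:P *: \sum_(i < n.+1)
        (jcoef m n i)%:R *: tens 'X^i 'X^(m + n - i).

End Defs.

From mathcomp Require Import all_boot all_order all_algebra.
From mathcomp Require Import zify.
Set Implicit Arguments. Unset Strict Implicit. Unset Printing Implicit Defensive.
Import GRing.Theory.
Local Open Scope ring_scope.

(* The coefficients of tau are binom(n, i) m(m+1)...(m+n-i-1).  In characteristic p
   they are invariant under m |-> m + p, and, by a binomial congruence and because a
   product of p consecutive integers is divisible by p, n |-> n + p shifts them by p
   in i.  So x^p and y^p pass through tau, hence so does every p-th power.  Given
   nonzero f and g in the ideals underlying an open subspace of k[x] (x)^! k[y], tau
   therefore maps (g^p) (x) k[x] + k[y] (x) (f^p) into it, which gives continuity.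
   Conversely, the preimage of the kernel of x |-> 0, y |-> 1 is open, so it contains
   y^m (x) f for some nonzero f and all m: the nonzero polynomial
   sum_n f_n t(t+1)...(t+n-1) vanishes at every natural number t, which is impossible
   in characteristic 0. *)

Lemma fact_add_prod m r : ((m + r)`! = m`! * \prod_(t < r) (m.+1 + t))%N.
Proof.
elim: r => [|r IHr]; first by rewrite addn0 big_ord0 muln1.
rewrite addnS factS IHr big_ord_recr /= mulnCA; congr (_ * _)%N.
by rewrite mulnC addSn.
Qed.

Lemma jcoefE m n i : jcoef m n i = ('C(n, i) * \prod_(t < n - i) (m + t))%N.
Proof.
rewrite /jcoef; case: m => [|m] /=.
  case: (ltngtP i n) => [lt_in | lt_ni | ->]; last by rewrite subnn big_ord0 binn.
    by rewrite -(subnSK lt_in) big_ord_recl mul0n muln0.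
  by rewrite bin_small.
case: (leqP i n) => [le_in | lt_ni]; last by rewrite !bin_small.
have -> : (m.+1 + n - i - 1 = m + (n - i))%N by lia.
by rewrite subn1 /= fact_add_prod mulKn ?fact_gt0.
Qed.

Lemma jcoef_small m n i : (n < i)%N -> jcoef m n i = 0%N.
Proof. by move=> lt_ni; rewrite jcoefE bin_small. Qed.

Lemma prime_dvd_rising p m r :
  prime p -> (p <= r)%N -> (p %| \prod_(t < r) (m + t))%N.
Proof.
move=> p_pr le_pr; have p_gt0 := prime_gt0 p_pr.
(* the factor with t = -m mod p *)
have t_lt_r : ((p - m %% p) %% p < r)%N by apply: leq_trans le_pr; rewrite ltn_pmod.
rewrite (bigD1 (Ordinal t_lt_r)) //= dvdn_mulr // /dvdn modnDmr -modnDml.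
by rewrite subnKC ?modnn // ltnW // ltn_pmod.
Qed.

Lemma sumr_ord_narrow (V : nmodType) n N (le_nN : (n <= N)%N) (F : 'I_N -> V) :
  (forall k : 'I_N, (n <= k)%N -> F k = 0) ->
  \sum_(k < N) F k = \sum_(k < n) F (widen_ord le_nN k).
Proof.
move=> F_eq0; rewrite -big_ord_narrow [RHS]big_mkcond /=.
by apply: eq_bigr => k _; case: ltnP => // /F_eq0.
Qed.

Lemma pchar_of_nat_roots (R : idomainType) (q : {poly R}) :
  q != 0 -> (forall m, root q m%:R) -> exists p, p \in [pchar R].
Proof.
move=> q_neq0 q_roots; pose rs := [seq (m%:R : R) | m <- iota 0 (size q)].
have : ~~ uniq rs.
  apply/negP => rs_uniq; suff : (size rs < size q)%N by rewrite size_map size_iota ltnn.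
  by apply: max_poly_roots rs_uniq => //; apply/allP => x /mapP[m _ ->].
case/(uniqPn 0) => i [j [lt_ij]]; rewrite size_map size_iota => lt_jq.
rewrite !(nth_map 0%N) ?size_iota ?(ltn_trans lt_ij) // !nth_iota ?(ltn_trans lt_ij) //.
rewrite !add0n => eq_ij; apply: (@natf0_pchar _ (j - i)); first by rewrite subn_gt0.
by rewrite natrB ?(ltnW lt_ij) // eq_ij subrr.
Qed.

Section PositiveCharacteristic.
Variables (R : nzSemiRingType) (p : nat).
Hypothesis pR : p \in [pchar R].

Lemma bin_prime_pchar j : ('C(p, j))%:R = ((j == 0%N) + (j == p))%:R :> R.
Proof.
have p_pr := pcharf_prime pR; have p_gt0 := prime_gt0 p_pr.
case: (ltngtP j p) => [lt_jp | lt_pj | ->]; last by rewrite binn gtn_eqF.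
  case: j lt_jp => [|j] lt_jp; first by rewrite bin0.
  by apply/eqP; rewrite -(dvdn_pcharf pR) prime_dvd_bin // lt_jp.
by rewrite bin_small // gtn_eqF // (leq_ltn_trans _ lt_pj).
Qed.

Lemma bin_addp_pchar n i :
  ('C(p + n, i))%:R = ('C(n, i))%:R + (if (p <= i)%N then ('C(n, i - p))%:R else 0) :> R.
Proof.
have p_gt0 := prime_gt0 (pcharf_prime pR).
rewrite -binomial.Vandermonde natr_sum big_ord_recl natrM bin_prime_pchar /=.
rewrite (ltn_eqF p_gt0) mul1r subn0; congr (_ + _).
rewrite (eq_bigr (fun j : 'I_i => if j == p.-1 :> nat then ('C(n, i - p))%:R else 0 : R)).
  by rewrite -big_mkcond (big_ord1_eq _ (fun _ => _)) prednK.
move=> j _; rewrite natrM bin_prime_pchar /bump /= add1n.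
have -> : (j.+1 == p) = (j == p.-1 :> nat) by apply/eqP/eqP; lia.
by case: eqP => [->|]; rewrite ?mul1r ?mul0r // prednK.
Qed.

Lemma rising_pchar m r : (p <= r)%N -> (\prod_(t < r) (m + t))%:R = 0 :> R.
Proof.
move=> le_pr; apply/eqP.
by rewrite -(dvdn_pcharf pR) prime_dvd_rising ?(pcharf_prime pR).
Qed.

Lemma jcoef_addp_inner m n i :
  (jcoef m (p + n) i)%:R = if (p <= i)%N then (jcoef m n (i - p))%:R else 0 :> R.
Proof.
rewrite !jcoefE !natrM bin_addp_pchar mulrDl.
case: (leqP i n) => [le_in | lt_ni].
  rewrite rising_pchar ?mulr0 ?add0r; last by lia.
  by case: ifP => // le_pi; rewrite rising_pchar ?mulr0 //; lia.
rewrite bin_small // mul0r add0r; case: ifP => [le_pi | _]; last by rewrite mul0r.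
by have -> : (p + n - i = n - (i - p))%N by lia.
Qed.

Lemma jcoef_addp_outer m n i : (jcoef (p + m) n i)%:R = (jcoef m n i)%:R :> R.
Proof.
rewrite !jcoefE !natrM !natr_prod; congr (_ * _); apply: eq_bigr => t _.
by rewrite -addnA natrD (pcharf0 pR) add0r.
Qed.

End PositiveCharacteristic.

Section TwistingMap.
Variable K : fieldType.
Implicit Types (P Q R : {poly {poly K}}) (e f q : {poly K}) (E F : {poly K} -> Prop).

Lemma coef_tens_outer e f i : (tens e f)`_i = e`_i *: f.
Proof. by rewrite /tens coef_map_id0 ?scale0r. Qed.

Lemma coef_tens e f i j : (tens e f)`_i`_j = e`_i * f`_j.
Proof. by rewrite coef_tens_outer coefZ. Qed.

Lemma size_tens e f : (size (tens e f) <= size e)%N.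
Proof. exact: size_poly. Qed.

Lemma tensE e f : tens e f = e^:P * f%:P.
Proof. by apply/polyP => i; rewrite coefMC coef_map /= mul_polyC coef_tens_outer. Qed.

Lemma tensMl e f q : tens (e * q) f = tens e f * q^:P.
Proof. by rewrite !tensE rmorphM mulrAC. Qed.

Lemma tensMr e f q : tens e (f * q) = tens e f * q%:P.
Proof. by rewrite !tensE polyCM mulrA. Qed.

Lemma tens_expansion R : R = \sum_(i < size R) tens 'X^i R`_i.
Proof.
rewrite -{1}[R]coefK poly_def; apply: eq_bigr => i _.
by rewrite tensE map_polyXn mulrC mul_polyC.
Qed.

(* [tau_mono m n] is the image of y^m (x) x^n, i.e. the normal form of y^m x^n. *)
Definition tau_mono m n : {poly {poly K}} :=
  \sum_(i < n.+1) (jcoef m n i)%:R *: tens 'X^i 'X^(m + n - i).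

Lemma tau_def P :
  tau P = \sum_(m < size P) \sum_(n < size P`_m) (P`_m`_n)%:P *: tau_mono m n.
Proof. by []. Qed.

Lemma tauE P M (N : nat -> nat) :
  (size P <= M)%N -> (forall m, (size (P`_m)%R <= N m)%N) ->
  tau P = \sum_(m < M) \sum_(n < N m) (P`_m`_n)%:P *: tau_mono m n.
Proof.
move=> le_PM le_PN; rewrite tau_def (sumr_ord_narrow le_PM) => [|m /(nth_default 0) ->].
  apply: eq_bigr => m _; rewrite (sumr_ord_narrow (le_PN m)) // => n /(nth_default 0) ->.
  by rewrite scale0r.
by apply: big1 => n _; rewrite coef0 scale0r.
Qed.

Lemma tau0 : tau 0 = 0 :> {poly {poly K}}.
Proof. by rewrite tau_def size_poly0 big_ord0. Qed.

Lemma tauD P Q : tau (P + Q) = tau P + tau Q.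
Proof.
pose M := maxn (size P) (size Q); pose N m := maxn (size P`_m) (size Q`_m).
rewrite (tauE (M := M) (N := N)) ?size_polyD // => [|m]; last by rewrite coefD size_polyD.
rewrite (tauE (P := P) (M := M) (N := N)) ?leq_maxl // => [|m]; last exact: leq_maxl.
rewrite (tauE (P := Q) (M := M) (N := N)) ?leq_maxr // => [|m]; last exact: leq_maxr.
rewrite -big_split; apply: eq_bigr => m _; rewrite -big_split; apply: eq_bigr => n _.
by rewrite !coefD polyCD scalerDl.
Qed.

Lemma tauZ c P : tau (c%:P *: P) = c%:P *: tau P.
Proof.
rewrite (tauE (M := size P) (N := fun m => size P`_m)) ?size_scale_leq // => [|m]; last first.
  by rewrite coefZ mul_polyC size_scale_leq.
rewrite tau_def scaler_sumr; apply: eq_bigr => m _; rewrite scaler_sumr.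
by apply: eq_bigr => n _; rewrite coefZ coefCM polyCM scalerA.
Qed.

Lemma tau_sum I (r : seq I) (F : I -> {poly {poly K}}) :
  tau (\sum_(x <- r) F x) = \sum_(x <- r) tau (F x).
Proof. exact: (big_morph _ tauD tau0). Qed.

Lemma coef_tau_mono m n i j :
  (tau_mono m n)`_i`_j = if (i + j == m + n)%N then (jcoef m n i)%:R else 0.
Proof.
rewrite /tau_mono !coef_sum.
under eq_bigr => k _ do rewrite coefZ -polyC_natr coefCM coef_tens !coefXn.
pose c : K := (jcoef m n i)%:R * (j == m + n - i)%N%:R.
rewrite (eq_bigr (fun k : 'I_n.+1 => if k == i :> nat then c else 0)); last first.
  by move=> k _; rewrite eq_sym; case: eqP => [->|]; rewrite ?mul1r ?mul0r ?mulr0.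
rewrite -big_mkcond (big_ord1_eq _ (fun _ => c)) ltnS /c.
case: leqP => [le_in | lt_ni]; last by rewrite jcoef_small // if_same.
have -> : (j == m + n - i)%N = (i + j == m + n)%N by apply/eqP/eqP; lia.
by case: (_ == _)%N; rewrite ?mulr1 ?mulr0.
Qed.

(* x is the inner variable of the input and the outer variable of the output;
   for y it is the other way round. *)
Section XpYpCentral.
Variable p : nat.
Hypothesis pK : p \in [pchar K].

Lemma tau_mono_addp_inner m n :
  tau_mono m (p + n) = 'X^p * tau_mono m n :> {poly {poly K}}.
Proof.
apply/polyP => i; apply/polyP => j; rewrite coefXnM coef_tau_mono (jcoef_addp_inner pK).
case: ltnP => [lt_ip | le_pi]; first by rewrite coef0 if_same.
rewrite coef_tau_mono; have -> // : (i - p + j == m + n)%N = (i + j == m + (p + n))%N.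
by apply/eqP/eqP; lia.
Qed.

Lemma tau_mono_addp_outer m n :
  tau_mono (p + m) n = ('X^p)%:P * tau_mono m n :> {poly {poly K}}.
Proof.
apply/polyP => i; apply/polyP => j.
rewrite coefCM coefXnM coef_tau_mono (jcoef_addp_outer pK).
case: ltnP => [lt_jp | le_pj].
  by case: eqP => // sum_ij; rewrite jcoef_small //; lia.
rewrite coef_tau_mono; have -> // : (i + (j - p) == m + n)%N = (i + j == p + m + n)%N.
by apply/eqP/eqP; lia.
Qed.

Lemma tau_mulXp_inner P : tau (P * ('X^p)%:P) = 'X^p * tau P.
Proof.
rewrite (tauE (M := size P) (N := fun m => addn p (size P`_m))); first last.
- move=> m; rewrite coefMC (leq_trans (size_polyMleq _ _)) //.
  by rewrite size_polyXn addnS addnC.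
- by rewrite [P * _]mulrC mul_polyC size_scale_leq.
rewrite (tau_def P) mulr_sumr; apply: eq_bigr => m _.
rewrite big_split_ord /= big1 ?add0r => [|n _]; last first.
  by rewrite coefMC coefMXn /= ltn_ord polyC0 scale0r.
rewrite mulr_sumr; apply: eq_bigr => n _.
by rewrite coefMC coefMXn ltnNge leq_addr addKn tau_mono_addp_inner scalerAr.
Qed.

Lemma tau_mulXp_outer P : tau (P * 'X^p) = ('X^p)%:P * tau P.
Proof.
rewrite (tauE (M := p + size P) (N := fun m => size (P * 'X^p)`_m)) //; last first.
  by rewrite (leq_trans (size_polyMleq _ _)) // size_polyXn addnS addnC.
rewrite (tau_def P) big_split_ord /= big1 ?add0r => [|m _]; last first.
  by rewrite coefMXn /= ltn_ord size_poly0 big_ord0.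
rewrite mulr_sumr; apply: eq_bigr => m _; rewrite coefMXn ltnNge leq_addr addKn /=.
by rewrite mulr_sumr; apply: eq_bigr => n _; rewrite tau_mono_addp_outer scalerAr.
Qed.

End XpYpCentral.

(* The q with tau (P * alpha q) = beta q * tau P for all P form a subring
   containing 'X^p, hence all p-th powers. *)
Section CommutingPowers.
Variables (p : nat) (alpha beta : {rmorphism {poly K} -> {poly {poly K}}}).
Hypotheses (pK : p \in [pchar K])
  (alphaC : forall c, alpha c%:P = c%:P%:P) (betaC : forall c, beta c%:P = c%:P%:P)
  (tau_alphaXp : forall P, tau (P * alpha 'X^p) = beta 'X^p * tau P).

Lemma tau_mul_exp_pchar f P : tau (P * alpha (f ^+ p)) = beta (f ^+ p) * tau P.
Proof.
pose commutes q := forall P, tau (P * alpha q) = beta q * tau P.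
have commutesC c : commutes c%:P.
  by move=> Q; rewrite alphaC betaC mulrC !mul_polyC tauZ.
have commutesD q1 q2 : commutes q1 -> commutes q2 -> commutes (q1 + q2).
  by move=> c1 c2 Q; rewrite !rmorphD mulrDr tauD c1 c2 mulrDl.
have commutesM q1 q2 : commutes q1 -> commutes q2 -> commutes (q1 * q2).
  by move=> c1 c2 Q; rewrite !rmorphM mulrA c2 c1 mulrA [beta q2 * _]mulrC.
have pK' : p \in [pchar {poly K}] by rewrite pchar_poly.
have frobD (g h : {poly K}) : (g + h) ^+ p = g ^+ p + h ^+ p.
  by rewrite -!(pFrobenius_autE pK') pFrobenius_autD_comm //; apply: mulrC.
move: P; elim/poly_ind: f => [|g c commutes_g].
  by rewrite -polyC0 -polyC_exp; apply: commutesC.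
rewrite frobD exprMn -polyC_exp.
by apply: commutesD; [apply: commutesM | apply: commutesC].
Qed.

End CommutingPowers.

Lemma tau_mul_exp_pchar_inner p f P :
  p \in [pchar K] -> tau (P * (f ^+ p)%:P) = (f ^+ p)^:P * tau P.
Proof.
move=> pK; apply: (tau_mul_exp_pchar (alpha := polyC) (beta := map_poly polyC) pK) => //.
- by move=> c; rewrite /= map_polyC.
- by move=> Q; rewrite /= map_polyXn; apply: tau_mulXp_inner.
Qed.

Lemma tau_mul_exp_pchar_outer p f P :
  p \in [pchar K] -> tau (P * (f ^+ p)^:P) = (f ^+ p)%:P * tau P.
Proof.
move=> pK; apply: (tau_mul_exp_pchar (alpha := map_poly polyC) (beta := polyC) pK) => //.
- by move=> c; rewrite /= map_polyC.
- by move=> Q; rewrite /= map_polyXn; apply: tau_mulXp_outer.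
Qed.

Lemma tgen0 E F : tgen E F 0.
Proof. by exists [::]; rewrite big_nil. Qed.

Lemma tgenD E F P R : tgen E F P -> tgen E F R -> tgen E F (P + R).
Proof.
move=> [s [s_gen ->]] [t [t_gen ->]]; exists (s ++ t); rewrite big_cat; split => // x.
by rewrite mem_cat => /orP[/s_gen | /t_gen].
Qed.

Lemma tgen_tens E F e f : E e \/ F f -> tgen E F (tens e f).
Proof. by move=> ef_gen; exists [:: (e, f)]; rewrite big_seq1; split=> // x /[!inE] /eqP->. Qed.

Lemma tgen_sum E F (I : eqType) (r : seq I) (G : I -> {poly {poly K}}) :
  (forall x, x \in r -> tgen E F (G x)) -> tgen E F (\sum_(x <- r) G x).
Proof.
move=> G_gen; rewrite big_seq; apply: (big_ind (tgen E F)) => //.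
- exact: tgen0.
- exact: tgenD.
Qed.

Lemma tgen_mul_inner E F q R : (forall a, F (a * q)) -> tgen E F (q%:P * R).
Proof.
move=> Fq; rewrite [R]tens_expansion mulr_sumr; apply: tgen_sum => i _.
by rewrite mulrC -tensMr; apply: tgen_tens; right.
Qed.

Lemma tgen_mul_outer E F q R : (forall a, E (a * q)) -> tgen E F (q^:P * R).
Proof.
move=> Eq; rewrite [R]tens_expansion mulr_sumr; apply: tgen_sum => i _.
by rewrite mulrC -tensMl; apply: tgen_tens; left.
Qed.

Lemma fin_codim_nz (I : {poly K} -> Prop) : fin_codim I -> exists2 f, I f & f != 0.
Proof.
move=> [s s_span]; pose N := (\sum_(i < size s) size (s`_i)%R)%N.
have [c Ic] := s_span 'X^N; exists ('X^N - \sum_(i < size s) c i *: s`_i) => //.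
apply/eqP => /(congr1 (fun g : {poly K} => g`_N)) /=.
rewrite coefB coefXn eqxx coef_sum coef0 big1; first by move/eqP; rewrite subr0 oner_eq0.
by move=> i _; rewrite coefZ nth_default ?mulr0 // /N (bigD1 i) //= leq_addr.
Qed.

Lemma ideal_mul_exp (I : {poly K} -> Prop) g n a :
  ideal I -> I g -> (0 < n)%N -> I (a * g ^+ n).
Proof.
move=> [_ [_ I_mul]] Ig; case: n => // n _.
by rewrite exprSr mulrA; case: (I_mul (a * g ^+ n) g Ig).
Qed.

Lemma cof_open_dvdp q : q != 0 -> cof_open (fun e => q %| e).
Proof.
move=> q_neq0; split.
  split=> [|a u v qu qv]; first exact: dvdp0.
  by rewrite -mul_polyC dvdp_addr // dvdp_mull.
exists (fun e => q %| e); split; last split => //.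
  split; first exact: dvdp0.
  split=> [u v qu qv | a u qu]; first exact: dvdp_sub.
  by rewrite dvdp_mull // dvdp_mulr.
pose basis : seq {poly K} := mkseq (fun i => 'X^i) (size q).
exists basis => f; exists (fun i => (f %% q)`_i).
have -> : \sum_(i < size basis) (f %% q)`_i *: basis`_i = f %% q.
  rewrite size_mkseq -[RHS](take_poly_id (ltnW (ltn_modpN0 f q_neq0))) /take_poly.
  by rewrite poly_def; apply: eq_bigr => i _; rewrite nth_mkseq.
by rewrite {1}(divp_eq f q) addrK dvdp_mull ?dvdpp.
Qed.

Lemma tcontinuous_tau_pchar p : p \in [pchar K] -> tcontinuous (@tau K).
Proof.
move=> pK W [[W0 W_lin] [E0 [F0 [[_ [I [I_ideal [I_fin IE0]]]] W_open]]]].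
move: W_open => [[_ [J [J_ideal [J_fin JF0]]]] W_gen].
have p_gt0 := prime_gt0 (pcharf_prime pK).
have [f If f_neq0] := fin_codim_nz I_fin.
have [g Jg g_neq0] := fin_codim_nz J_fin.
split.
  split=> [|c u v Wu Wv]; first by rewrite tau0.
  by rewrite tauD tauZ; apply: W_lin.
exists (fun e => g ^+ p %| e), (fun e => f ^+ p %| e).
do 2 (split; first by apply: cof_open_dvdp; rewrite expf_neq0).
move=> _ [s [s_gen ->]]; apply: W_gen; rewrite tau_sum; apply: tgen_sum => x.
move=> /s_gen[/divpK <- | /divpK <-].
- rewrite tensMl (tau_mul_exp_pchar_outer _ _ pK); apply: tgen_mul_inner => a.
  by apply: JF0; apply: ideal_mul_exp.
- rewrite tensMr (tau_mul_exp_pchar_inner _ _ pK); apply: tgen_mul_outer => a.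
  by apply: IE0; apply: ideal_mul_exp.
Qed.

Lemma horner_tens e f (a b : K) : (tens e f).[a%:P].[b] = e.[a] * f.[b].
Proof. by rewrite tensE hornerM hornerC horner_map /= hornerCM. Qed.

Lemma tens_open_horner (a b : K) : tens_open (fun Q => Q.[a%:P].[b] = 0).
Proof.
split.
  split=> [|c u v u0 v0]; first by rewrite !horner0.
  by rewrite hornerD hornerZ !hornerE u0 v0 mulr0 addr0.
exists (fun e => ('X - a%:P) %| e), (fun f => ('X - b%:P) %| f).
do 2 (split; first by apply: cof_open_dvdp; rewrite polyXsubC_eq0).
move=> _ [s [s_gen ->]]; rewrite !horner_sum big1_seq // => x /andP[_ /s_gen].
by rewrite horner_tens !dvdp_XsubCl => -[/eqP-> | /eqP->]; rewrite ?mul0r ?mulr0.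
Qed.

Lemma horner_tau_mono m n : (tau_mono m n).[0%:P].[1] = (jcoef m n 0)%:R.
Proof.
rewrite /tau_mono !horner_sum big_ord_recl big1 ?addr0 => [|i _].
  by rewrite hornerZ -polyC_natr hornerCM horner_tens !hornerXn expr0 expr1n !mulr1.
by rewrite hornerZ hornerM horner_tens hornerXn expr0n /= mul0r mulr0.
Qed.

Lemma horner_tau_tensXn m f :
  (tau (tens 'X^m f)).[0%:P].[1] = \sum_(n < size f) f`_n * (jcoef m n 0)%:R.
Proof.
rewrite (tauE (M := m.+1) (N := fun=> size f)); first last.
- by move=> k; rewrite coef_tens_outer size_scale_leq.
- by rewrite (leq_trans (size_tens _ _)) ?size_polyXn.
rewrite big_ord_recr /= big1 ?add0r => [|k _]; last first.
  by apply: big1 => n _; rewrite coef_tens coefXn ltn_eqF // mulr0n mul0r polyC0 scale0r.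
rewrite !horner_sum; apply: eq_bigr => n _.
by rewrite coef_tens coefXn eqxx mul1r hornerZ hornerCM horner_tau_mono.
Qed.

Definition rising_poly n : {poly K} := \prod_(t < n) ('X + t%:R%:P).

Lemma rising_poly_monic n : rising_poly n \is monic.
Proof. by apply: monic_prod => t _; apply: monicXaddC. Qed.

Lemma size_rising_poly n : size (rising_poly n) = n.+1.
Proof.
elim: n => [|n IHn]; first by rewrite /rising_poly big_ord0 size_poly1.
rewrite /rising_poly big_ord_recr /= size_Mmonic ?monic_neq0 ?rising_poly_monic ?monicXaddC //.
by rewrite IHn size_XaddC addn2.
Qed.

Lemma horner_rising_poly n m : (rising_poly n).[m%:R] = (jcoef m n 0)%:R.
Proof.
rewrite horner_prod jcoefE bin0 subn0 mul1n natr_prod; apply: eq_bigr => t _.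
by rewrite hornerD hornerX hornerC natrD.
Qed.

Lemma rising_poly_comb_neq0 f : f != 0 -> \sum_(n < size f) f`_n *: rising_poly n != 0.
Proof.
move=> f_neq0; have := f_neq0; rewrite -size_poly_gt0 => /prednK <-.
rewrite big_ord_recr /=; set k := (size f).-1.
apply/eqP => /(congr1 (fun g : {poly K} => g`_k)) /=.
rewrite coefD coef_sum big1 => [|n _]; last first.
  by rewrite coefZ [_`_k]nth_default ?mulr0 // size_rising_poly.
have lead_rising : (rising_poly k)`_k = 1.
  by have := monicP (rising_poly_monic k); rewrite lead_coefE size_rising_poly.
rewrite add0r coef0 coefZ lead_rising mulr1 => /eqP.
by rewrite /k -lead_coefE lead_coef_eq0 (negbTE f_neq0).
Qed.

Lemma pchar_of_tcontinuous_tau : tcontinuous (@tau K) -> exists p, p \in [pchar K].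
Proof.
move=> tau_cont.
have [_ [E0 [F0 [_ [[_ [J [_ [J_fin JF0]]]] W_gen]]]]] := tau_cont _ (tens_open_horner 0 1).
have [f Jf f_neq0] := fin_codim_nz J_fin.
apply: (pchar_of_nat_roots (rising_poly_comb_neq0 f_neq0)) => m.
have := W_gen (tens 'X^m f) (tgen_tens (or_intror (JF0 f Jf))).
rewrite horner_tau_tensXn => sum0; apply/eqP; rewrite horner_sum -[RHS]sum0.
by apply: eq_bigr => n _; rewrite hornerZ horner_rising_poly.
Qed.

End TwistingMap.

Theorem lemma5p2 (K : fieldType) :
  tcontinuous (@tau K) <-> exists p : nat, p \in [pchar K].
Proof.
split; first exact: pchar_of_tcontinuous_tau.
by case=> p; apply: tcontinuous_tau_pchar.
Qed.
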